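(* Let $\Gamma$ be a set of clauses with designated blocking variables. If a clause $C$ is cost-SR w.r.t. $\Gamma$, then $\mathrm{cost}(\Gamma)=\mathrm{cost}(\Gamma\cup\{C\})$.
   Context: Substitutions map variables to $0$, $1$ or literals ($\sigma(\lnot x)=\lnot\sigma(x)$, $\sigma(0)=0$, $\sigma(1)=1$); $(\sigma\circ\tau)(x)=\sigma(\tau(x))$; total assignments assign Boolean values to all variables. $C{\upharpoonright}_\sigma$: apply $\sigma$ to the literals and simplify ($D\lor0=D$, $D\lor1=1$, merge repeats); $\sigma\models C$ if the result is $1$ or tautological; $\Gamma{\upharpoonright}_\sigma$ is the multiset of $C{\upharpoonright}_\sigma\ne1$, $C\in\Gamma$. $\lnot C$ is the partial assignment falsifying all literals of $C$; $\tau\supseteq\rho$ means extension. $\Gamma\vdash_1 C$ means unit propagation on $\Gamma{\upharpoonright}_{\lnot C}$ derives the empty clause; $\Gamma\vdash_1\Delta$ means this for all $D\in\Delta$. With blocking variables $b_1,\dots,b_m$: $\mathrm{cost}(\alpha)=\sum_i\alpha(b_i)$, $\mathrm{cost}(\Gamma)=\min\{\mathrm{cost}(\alpha):\alpha\models\Gamma\}$. $C$ is cost-SR w.r.t. $\Gamma$ if there is a substitution $\sigma$ with (1) $\Gamma{\upharpoonright}_{\lnot C}\vdash_1(\Gamma\cup\{C\}){\upharpoonright}_\sigma$ and (2) $\mathrm{cost}(\tau\circ\sigma)\le\mathrm{cost}(\tau)$ for every total assignment $\tau\supseteq\lnot C$. *)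

From mathcomp Require Import all_boot.
Set Implicit Arguments. Unset Strict Implicit. Unset Printing Implicit Defensive.

(** Variables are natural numbers.  A literal is a pair (x, s): the literal x
    if s = true, the literal ~x if s = false. *)
Definition var := nat.
Definition lit := (nat * bool)%type.
Definition lit_var (l : lit) : var := l.1.
Definition lit_neg (l : lit) : lit := (l.1, ~~ l.2).

(** A clause is a disjunction of literals (a list; repeats are harmless).
    A formula (set of clauses) is a list of clauses (a multiset). *)
Definition clause := seq lit.
Definition cnf := seq clause.

Definition assignment := var -> bool.
Definition eval_lit (a : assignment) (l : lit) : bool := a l.1 == l.2.
Definition sat_clause (a : assignment) (C : clause) : bool := has (eval_lit a) C.
Definition sat (a : assignment) (G : cnf) : Prop := forall C, C \in G -> sat_clause a C.

Inductive term := TConst of bool | TLit of lit.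
Definition subst := var -> term.

Definition term_neg (t : term) : term :=
  match t with TConst b => TConst (~~ b) | TLit l => TLit (lit_neg l) end.

Definition subst_lit (s : subst) (l : lit) : term :=
  if l.2 then s l.1 else term_neg (s l.1).

Definition eval_term (a : assignment) (t : term) : bool :=
  match t with TConst b => b | TLit l => eval_lit a l end.
Definition comp_assign (a : assignment) (s : subst) : assignment :=
  fun x => eval_term a (s x).

(** C|sigma: apply sigma to the literals and simplify (D v 0 = D, D v 1 = 1,
    merge repeats).  [None] stands for the constant 1; [Some D] for the clause D
    (the empty clause [Some [::]] is the constant 0). *)
Definition restrict_clause (s : subst) (C : clause) : option clause :=
  let ts := map (subst_lit s) C in
  if has (fun t => if t is TConst true then true else false) ts then None
  else Some (undup (pmap (fun t => match t with TLit l => Some l | TConst _ => None end) ts)).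

Definition restrict (s : subst) (G : cnf) : cnf := pmap (restrict_clause s) G.

Definition tautological (C : clause) : bool := has (fun l => lit_neg l \in C) C.

(** ~C, the (partial) assignment falsifying all literals of C, viewed as a
    substitution (identity on variables not occurring in C).  For a
    tautological C the assignment is inconsistent; this case is handled
    separately wherever it matters. *)
Definition neg_subst (C : clause) : subst :=
  fun x => if (x, true) \in C then TConst false
           else if (x, false) \in C then TConst true
           else TLit (x, true).

Definition extends_neg (a : assignment) (C : clause) : Prop :=
  forall l, l \in C -> eval_lit a l = false.

Definition unit_subst (l : lit) : subst :=
  fun x => if x == l.1 then TConst l.2 else TLit (x, true).

Inductive up_refutes : cnf -> Prop :=
| up_empty (D : cnf) : [::] \in D -> up_refutes D
| up_step (D : cnf) (l : lit) :
    [:: l] \in D -> up_refutes (restrict (unit_subst l) D) -> up_refutes D.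

(** Gamma |-_1 C: unit propagation on Gamma|~C derives the empty clause.
    (If C is tautological, ~C is contradictory and this holds trivially.) *)
Definition up_implies (G : cnf) (C : clause) : Prop :=
  tautological C \/ up_refutes (restrict (neg_subst C) G).

Definition up_implies_all (G : cnf) (D : cnf) : Prop :=
  forall C, C \in D -> up_implies G C.

Definition cost (bs : seq var) (a : assignment) : nat :=
  sumn [seq nat_of_bool (a b) | b <- bs].

(** cost(Gamma) = min { cost a | a |= Gamma }, with [None] = +infinity
    (the minimum of the empty set, when Gamma is unsatisfiable).
    [is_cost bs G c] means cost(G) = c. *)
Definition is_cost (bs : seq var) (G : cnf) (c : option nat) : Prop :=
  match c with
  | Some k => (exists a, sat a G /\ cost bs a = k) /\
              (forall a, sat a G -> k <= cost bs a)
  | None => forall a, ~ sat a G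
  end.

Definition cost_SR (bs : seq var) (G : cnf) (C : clause) : Prop :=
  exists s : subst,
    up_implies_all (restrict (neg_subst C) G) (restrict s (C :: G)) /\
    (forall tau : assignment, extends_neg tau C ->
       cost bs (comp_assign tau s) <= cost bs tau).

From mathcomp Require Import all_boot.
Set Implicit Arguments. Unset Strict Implicit. Unset Printing Implicit Defensive.

(* Every model of [C :: G] is a model of [G].  Conversely, a model [tau] of
   [G] either satisfies [C] already, or it extends ~C; then [tau] satisfies
   [G|~C], so by soundness of unit propagation it satisfies [(C :: G)|sigma],
   i.e. [tau o sigma] is a model of [C :: G], and by the cost condition it
   costs no more than [tau]. *)

Lemma eval_lit_comp_assign a s (l : lit) :
  eval_lit (comp_assign a s) l = eval_term a (subst_lit s l).
Proof.
case: l => x [] /=; rewrite /eval_lit /comp_assign /subst_lit /=.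
  by case: (s x) => [b|[y t]] /=; rewrite ?eqb_id.
by case: (s x) => [[]|[y t]] //=; rewrite /eval_lit /=; case: (a y); case: t.
Qed.

Lemma sat_clause_comp_assign a s (D : clause) :
  sat_clause (comp_assign a s) D =
  if restrict_clause s D is Some D' then sat_clause a D' else true.
Proof.
rewrite /sat_clause /restrict_clause (eq_has (eval_lit_comp_assign a s)) -has_map.
case: ifP; last rewrite has_undup;
  elim: (map _ D) => [|[[]|l] ts IH] //=; first by move/IH ->; rewrite orbT.
by move/IH ->.
Qed.

Lemma eq_sat_clause a b (D : clause) : a =1 b -> sat_clause a D = sat_clause b D.
Proof. by move=> eq_ab; apply: eq_has => l; rewrite /eval_lit eq_ab. Qed.

Lemma sat_cons a (C : clause) (G : cnf) :
  sat a (C :: G) <-> sat_clause a C /\ sat a G.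
Proof.
split=> [satCG | [satC satG] D]; last by rewrite inE => /predU1P [->|/satG].
by split=> [|D GD]; apply: satCG; rewrite inE ?GD ?orbT ?eqxx.
Qed.

Lemma sat_restrict a s (G : cnf) :
  sat a (restrict s G) <-> sat (comp_assign a s) G.
Proof.
split=> [satGs D GD | satG D'].
  rewrite sat_clause_comp_assign; case Ds: restrict_clause => [D'|] //.
  by apply: satGs; rewrite mem_pmap; apply/mapP; exists D.
rewrite mem_pmap => /mapP [D /satG]; rewrite sat_clause_comp_assign.
by case: restrict_clause => //= D'' satD [->].
Qed.

Lemma sat_restrict_fixed a s (G : cnf) :
  comp_assign a s =1 a -> sat a G -> sat a (restrict s G).
Proof.
by move=> fix_a satG; apply/sat_restrict => D /satG; rewrite (eq_sat_clause _ fix_a).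
Qed.

Lemma extends_negP a (C : clause) : reflect (extends_neg a C) (~~ sat_clause a C).
Proof.
by apply: (iffP hasPn) => [falseC l /falseC /negbTE | negC l /negC ->].
Qed.

Lemma comp_assign_neg_subst a (C : clause) :
  extends_neg a C -> comp_assign a (neg_subst C) =1 a.
Proof.
move=> negC x; rewrite /comp_assign /neg_subst.
case: ifP => [/negC | _]; first by rewrite /eval_lit /=; case: (a x).
case: ifP => [/negC | _]; first by rewrite /eval_lit /=; case: (a x).
by rewrite /= /eval_lit eqb_id.
Qed.

Lemma comp_assign_unit_subst a (l : lit) :
  eval_lit a l -> comp_assign a (unit_subst l) =1 a.
Proof.
move=> /eqP al x; rewrite /comp_assign /unit_subst.
by case: eqP => [-> | _] /=; rewrite ?al // /eval_lit eqb_id.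
Qed.

Lemma up_refutes_unsat (F : cnf) a : up_refutes F -> ~ sat a F.
Proof.
move=> refF; elim: refF a => [D emptyD | D l unitD _ IH] a satD.
  by have := satD _ emptyD.
have al : eval_lit a l by have := satD _ unitD; rewrite /sat_clause /= orbF.
exact/(IH a)/sat_restrict_fixed/satD/comp_assign_unit_subst.
Qed.

Lemma eval_lit_neg a (l : lit) : eval_lit a (lit_neg l) = ~~ eval_lit a l.
Proof. by case: l => x [] /=; rewrite /eval_lit /=; case: (a x). Qed.

Lemma sat_clause_tautological a (D : clause) : tautological D -> sat_clause a D.
Proof.
case/hasP=> l Dl Dnl; apply/hasP.
by case al: (eval_lit a l); [exists l | exists (lit_neg l); rewrite ?eval_lit_neg ?al].
Qed.

Lemma up_implies_sound a (F : cnf) (D : clause) :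
  sat a F -> up_implies F D -> sat_clause a D.
Proof.
move=> satF [/sat_clause_tautological // | refF].
apply/negPn/negP => /extends_negP negD; apply: (up_refutes_unsat refF).
exact/sat_restrict_fixed/satF/comp_assign_neg_subst.
Qed.

Lemma cost_SR_improve bs (G : cnf) (C : clause) a :
  cost_SR bs G C -> sat a G ->
  exists2 a', sat a' (C :: G) & cost bs a' <= cost bs a.
Proof.
move=> [s [upGs costs]] satG.
have [satC | /extends_negP negC] := boolP (sat_clause a C).
  by exists a => //; apply/sat_cons.
exists (comp_assign a s); last exact: costs.
have satGnegC : sat a (restrict (neg_subst C) G).
  exact/sat_restrict_fixed/satG/comp_assign_neg_subst.
by apply/sat_restrict => D /upGs; apply: up_implies_sound.
Qed.

Lemma is_cost_eq bs (G1 G2 : cnf) c :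
  (forall a, sat a G2 -> sat a G1) ->
  (forall a, sat a G1 -> exists2 a', sat a' G2 & cost bs a' <= cost bs a) ->
  is_cost bs G1 c <-> is_cost bs G2 c.
Proof.
move=> sat21 improve; case: c => [k|] /=; split.
- move=> [[a [satGa <-]] minG1]; split=> [|b /sat21/minG1 //].
  have [a' satG2a' le_a'a] := improve a satGa.
  exists a'; split=> //; apply/eqP; rewrite eqn_leq le_a'a minG1 //.
  exact: sat21.
- move=> [[a [satG2a <-]] minG2]; split; first by exists a; split=> //; apply: sat21.
  by move=> b /improve [b' /minG2]; apply: leq_trans.
- by move=> unsatG1 a /sat21/unsatG1.
- by move=> unsatG2 a /improve [a' /unsatG2].
Qed.

Theorem lemma3p7 (bs : seq var) (G : cnf) (C : clause) :
  cost_SR bs G C -> forall c : option nat, is_cost bs G c <-> is_cost bs (C :: G) c.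
Proof.
move=> srC c; apply: is_cost_eq => a; first by case/sat_cons.
exact: cost_SR_improve.
Qed.
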